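(* Let $K\ge 1$ and let $H\in\mathbb{C}^{K\times K}$ be of the form $H = D + uv^T$, where $D\in\mathbb{C}^{K\times K}$ is an invertible diagonal matrix and $u,v\in\mathbb{C}^{K\times 1}$ are column vectors all of whose components are nonzero. Suppose $$\alpha := 3 + 3\,v^TD^{-1}u + (v^TD^{-1}u)^2 \neq 1.$$ Then there exist diagonal matrices $D_1,D_2,D_3\in\mathbb{C}^{K\times K}$ such that the matrix $HD_2 + HD_3 H^T D_1 H$ is diagonal and every one of its diagonal entries is nonzero.
   Context: This is the condition for a three-phase interactive scheme on a $K$-user interference channel with forward channel matrix $H$ and reciprocal feedback channel $G=H^T$: in phase 1 sources send $x$ and destinations receive $Hx$; in phase 2 destinations send $D_1 y$ back and sources receive $H^T D_1 y$; in phase 3 sources send $D_2 x + D_3 f$, so destinations receive $(HD_2+HD_3H^TD_1H)x$ (noise ignored). The coding matrices $D_1,D_2,D_3$ must be diagonal since each node only codes over its own signals. The conclusion means each destination $t_i$ receives its desired symbol $x_i$ free of interference after two forward and one reverse transmissions. *)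

From mathcomp Require Import all_boot all_order all_algebra.
From mathcomp Require Export complex.
Set Implicit Arguments. Unset Strict Implicit. Unset Printing Implicit Defensive.

From mathcomp Require Import all_boot all_order all_algebra.
From mathcomp Require Import reals complex.
From mathcomp Require Import ring.
Import GRing.Theory Num.Theory.
Set Implicit Arguments.
Unset Strict Implicit.
Local Open Scope ring_scope.
Local Open Scope complex_scope.

(** Write [H = D + u v^T] and [s = v^T D^-1 u], and let [W] be the diagonal
    matrix with [W u = v].  Since [D^-1 W] is diagonal, hence symmetric,
    [H^T (D^-1 W) H = W D + (2 + s) v v^T], and [H (D^-1 u) = (1 + s) u].
    With [c = (1 + s)(2 + s) = 3 + 3 s + s^2 - 1 <> 0], the choice
    [D1 = D^-1 W], [D2 = (1 + 1/c) I], [D3 = -(1/c) D^-1 W^-1] makes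
    [H D2 + H D3 H^T D1 H = H - u v^T = D]. *)

Section DiagonalMatrices.
Variables (F : fieldType) (n : nat).

Lemma diag_mx_mulV (d : 'rV[F]_n) :
  (forall i, d 0 i != 0) -> diag_mx d *m diag_mx (map_mx GRing.inv d) = 1%:M.
Proof.
move=> d_neq0; rewrite mulmx_diag -diag_const_mx; congr diag_mx.
by apply/rowP=> i; rewrite !mxE mulfV.
Qed.

Lemma diag_mx_unit_neq0 (d : 'rV[F]_n) :
  diag_mx d \in unitmx -> forall i, d 0 i != 0.
Proof.
by rewrite unitmxE det_diag unitfE => /prodf_neq0 d_neq0 i; apply: d_neq0.
Qed.

Lemma invmx_diag (d : 'rV[F]_n) :
  (forall i, d 0 i != 0) -> invmx (diag_mx d) = diag_mx (map_mx GRing.inv d).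
Proof.
move=> d_neq0; have dV := diag_mx_mulV d_neq0.
have [d_unit _] := mulmx1_unit dV.
by rewrite -[invmx _]mulmx1 -dV mulmxA mulVmx // mul1mx.
Qed.

Definition diag_ratio (a b : 'cV[F]_n) := diag_mx (\row_i (b i 0 / a i 0)).

Lemma diag_ratioK (a b : 'cV[F]_n) :
  (forall i, a i 0 != 0) -> diag_ratio a b *m a = b.
Proof.
by move=> a_neq0; apply/matrixP=> i j; rewrite mul_diag_mx !mxE ord1 divfK.
Qed.

Lemma mul_diag_ratio (a b : 'cV[F]_n) :
  (forall i, a i 0 != 0) -> (forall i, b i 0 != 0) ->
  diag_ratio b a *m diag_ratio a b = 1%:M.
Proof.
move=> a_neq0 b_neq0; rewrite mulmx_diag -diag_const_mx; congr diag_mx.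
by apply/rowP=> i; rewrite !mxE mulrA divfK // mulfV.
Qed.

End DiagonalMatrices.

Section RankOneUpdate.
Variables (F : fieldType) (K : nat) (d : 'rV[F]_K) (u v : 'cV[F]_K) (s : F).
Hypotheses (d_neq0 : forall i, d 0 i != 0)
  (u_neq0 : forall i, u i 0 != 0) (v_neq0 : forall i, v i 0 != 0).

Local Notation D := (diag_mx d).
Local Notation Dinv := (diag_mx (map_mx GRing.inv d)).
Local Notation W := (diag_ratio u v).
Local Notation H := (D + u *m v^T).

Hypothesis vDu : v^T *m Dinv *m u = s%:M.

Let DDinv : D *m Dinv = 1%:M. Proof. exact: diag_mx_mulV. Qed.
Let DinvD : Dinv *m D = 1%:M. Proof. by rewrite diag_mxC. Qed.

Lemma rank_one_update_mul_Dinv_u : H *m (Dinv *m u) = (1 + s) *: u.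
Proof.
rewrite mulmxDl !mulmxA DDinv mul1mx.
have -> : u *m v^T *m Dinv *m u = u *m (v^T *m Dinv *m u) by rewrite !mulmxA.
by rewrite vDu mul_mx_scalar scalerDl scale1r.
Qed.

Lemma rank_one_update_congruence :
  H^T *m (Dinv *m W) *m H = W *m D + (2 + s) *: (v *m v^T).
Proof.
have uDv : u^T *m Dinv *m v = s%:M.
  by rewrite -tr_scalar_mx -vDu !trmx_mul trmxK tr_diag_mx mulmxA.
have uW : u^T *m W = v^T by rewrite -[W]tr_diag_mx -trmx_mul diag_ratioK.
have DinvWD : Dinv *m W *m D = W.
  by rewrite -mulmxA [W *m D]diag_mxC mulmxA DinvD mul1mx.
have DinvW_H : Dinv *m W *m H = W + Dinv *m v *m v^T.
  by rewrite mulmxDr DinvWD !mulmxA -(mulmxA Dinv) diag_ratioK.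
have HT : H^T = D + v *m u^T by rewrite linearD /= trmx_mul trmxK tr_diag_mx.
rewrite -mulmxA DinvW_H HT mulmxDl !mulmxDr !mulmxA DDinv mul1mx.
rewrite -(mulmxA v (u^T) W) uW.
have -> : v *m u^T *m Dinv *m v *m v^T = s *: (v *m v^T).
  have -> : v *m u^T *m Dinv *m v = v *m (u^T *m Dinv *m v) by rewrite !mulmxA.
  by rewrite uDv mul_mx_scalar scalemxAl.
by rewrite [D *m W]diag_mxC scalerDl scaler_nat mulr2n !addrA.
Qed.

Local Notation c := ((1 + s) * (2 + s)).

Lemma rank_one_update_diagonalize : c != 0 ->
  H *m (1 + c^-1)%:M
    + H *m (- c^-1 *: (Dinv *m diag_ratio v u)) *m H^T *m (Dinv *m W) *m H = D.
Proof.
move=> c_neq0; have s1_neq0 : 1 + s != 0 by apply: contraNneq c_neq0 => ->; rewrite mul0r.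
have invc_mul_2s : - c^-1 * (2 + s) = - (1 + s)^-1.
  rewrite invfM mulNr -mulrA mulVf ?mulr1 //.
  by apply: contraNneq c_neq0 => ->; rewrite mulr0.
have Dinv_ratio_WD : Dinv *m diag_ratio v u *m (W *m D) = 1%:M.
  by rewrite mulmxA -(mulmxA Dinv) mul_diag_ratio // mulmx1 DinvD.
have Dinv_ratio_v : Dinv *m diag_ratio v u *m v = Dinv *m u.
  by rewrite -mulmxA diag_ratioK.
have D3_congruence : - c^-1 *: (Dinv *m diag_ratio v u) *m (H^T *m (Dinv *m W) *m H)
    = (- c^-1)%:M - (1 + s)^-1 *: (Dinv *m u *m v^T).
  rewrite rank_one_update_congruence mulmxDr -!scalemxAl -!scalemxAr Dinv_ratio_WD.
  by rewrite mulmxA Dinv_ratio_v scalerA invc_mul_2s scalemx1 raddfN /= scaleNr.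
have -> : forall A B C : 'M_K, H *m A *m H^T *m B *m C = H *m (A *m (H^T *m B *m C)).
  by move=> A B C; rewrite !mulmxA.
rewrite D3_congruence -mulmxDr.
rewrite addrA -raddfD /= addrK mulmxBr mulmx1 -scalemxAr mulmxA.
by rewrite rank_one_update_mul_Dinv_u -scalemxAl scalerA mulVf // scale1r addrK.
Qed.

End RankOneUpdate.

Theorem theorem1 (R : realType) (K : nat) (hK : (1 <= K)%N)
  (D : 'M[R[i]]_K) (u v : 'cV[R[i]]_K)
  (hDdiag : is_diag_mx D) (hDinv : D \in unitmx)
  (hu : forall i, u i 0 != 0) (hv : forall i, v i 0 != 0) :
  let H := D + u *m v^T in
  let s := (v^T *m invmx D *m u) 0 0 in
  3 + 3 * s + s ^+ 2 != 1 ->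
  exists D1 D2 D3 : 'M[R[i]]_K,
    [/\ is_diag_mx D1, is_diag_mx D2, is_diag_mx D3,
        is_diag_mx (H *m D2 + H *m D3 *m H^T *m D1 *m H)
      & forall i, (H *m D2 + H *m D3 *m H^T *m D1 *m H) i i != 0].
Proof.
move=> H s alpha_neq1.
have /diag_mxP[d D_diag] := hDdiag.
have d_neq0 : forall i, d 0 i != 0 by apply: diag_mx_unit_neq0; rewrite -D_diag.
have vDu : v^T *m diag_mx (map_mx GRing.inv d) *m u = s%:M.
  by rewrite -invmx_diag // -D_diag; apply: mx11_scalar.
set c := (1 + s) * (2 + s).
have c_neq0 : c != 0.
  have alpha_eq : 3 + 3 * s + s ^+ 2 = 1 + c by rewrite /c; ring.
  by apply: contraNneq alpha_neq1 => c_eq0; rewrite alpha_eq c_eq0 addr0.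
exists (diag_mx (map_mx GRing.inv d) *m diag_ratio u v), (1 + c^-1)%:M,
  (- c^-1 *: (diag_mx (map_mx GRing.inv d) *m diag_ratio v u)).
rewrite /H D_diag rank_one_update_diagonalize //.
split=> //; rewrite ?mulmx_diag ?diag_mx_is_diag ?scalar_mx_is_diag //.
- by rewrite -linearZ diag_mx_is_diag.
- by move=> i; rewrite mxE eqxx mulr1n.
Qed.
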